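(* Let $\mu,\lambda$ be positive integers with $\lambda\ge e\mu$. Let $(X_t)_{t\ge0}$ be a random process with deterministic initial value $X_0\in\{1,\dots,\mu\}$ such that for every $t\ge1$, conditionally on $X_0,\dots,X_{t-1}$, $X_t$ has the law of $\min\{\mu,B\}$ with $B\sim\mathrm{Bin}(\lambda,\frac{X_{t-1}}{e\mu})$. Then for all $t\in\mathbb{N}$ and all $\Delta>0$, \[\Pr\big[\exists\,\tau\in\{1,\dots,t\}:\ X_\tau<X_0-\Delta\big]\le\frac{tX_0}{\Delta^2}.\]
   Context: $\mathrm{Bin}(m,p)$ denotes the binomial distribution with $m$ trials and success probability $p$. *)

From Stdlib Require Import Reals Lra Lia List.
Import ListNotations.
Open Scope R_scope.

Definition eul : R := exp 1.

Definition binom_pmf (n : nat) (p : R) (k : nat) : R :=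
  C n k * p ^ k * (1 - p) ^ (n - k).

(* Transition kernel: from state x, the next state is min{mu, B}
   with B ~ Bin(lambda, x/(e mu)).  Probability of moving to y. *)
Definition trans (mu lambda x y : nat) : R :=
  let p := INR x / (eul * INR mu) in
  if Nat.ltb y mu then binom_pmf lambda p y
  else if Nat.eqb y mu then
    fold_right Rplus 0 (map (binom_pmf lambda p) (seq mu (S lambda - mu)))
  else 0.

Fixpoint paths (m n : nat) : list (list nat) :=
  match n with
  | O => [[]]
  | S n' => flat_map (fun y => map (cons y) (paths m n')) (seq 0 (S m))
  end.

Fixpoint path_prob (mu lambda x : nat) (p : list nat) : R :=
  match p with
  | [] => 1
  | y :: p' => trans mu lambda x y * path_prob mu lambda y p'
  end.

(* Pr[ exists tau in {1..t}, X_tau < c ] for the chain started at X_0 = x0 *)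
Definition hit_below_prob (mu lambda x0 t : nat) (c : R) : R :=
  fold_right Rplus 0
    (map (fun p =>
            if existsb (fun y => if Rlt_dec (INR y) c then true else false) p
            then path_prob mu lambda x0 p else 0)
         (paths mu t)).

From Stdlib Require Import Reals Lra Lia List.
Import ListNotations.
Open Scope R_scope.

(* Write c = x0 - Delta and shortfall(x) = max(0, x0 - x).  We show by
   induction on n that, from any state x <= mu, the probability of falling
   below c within n steps is at most
       potential n x = (shortfall(x)^2 + n * x0) / Delta^2 .
   A state below c has shortfall > Delta, so its potential is >= 1, which
   covers the absorbed case; otherwise the induction hypothesis is used.
   The heart of the argument is a one-step drift bound: for B ~ Bin(lambda,p)
   with mean m = lambda p >= x (this is where lambda >= e mu enters),
       E[shortfall(min(mu,B))^2] <= E[(x0 - r B)^2] <= shortfall(x)^2 + x0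
   for r = min(x,x0)/m, computed from the first two binomial moments. *)

Definition sum_list {A} (f : A -> R) (l : list A) : R := fold_right Rplus 0 (map f l).

Section SumList.
Context {A : Type}.

Lemma sum_list_cons (f : A -> R) a l : sum_list f (a :: l) = f a + sum_list f l.
Proof. reflexivity. Qed.

Lemma sum_list_app (f : A -> R) l1 l2 :
  sum_list f (l1 ++ l2) = sum_list f l1 + sum_list f l2.
Proof. unfold sum_list. induction l1 as [|a l1 IH]; simpl; [lra|]. rewrite IH; lra. Qed.

Lemma sum_list_ext (f g : A -> R) l :
  (forall x, In x l -> f x = g x) -> sum_list f l = sum_list g l.
Proof.
  induction l as [|a l IH]; intros Hfg; [reflexivity|].
  rewrite !sum_list_cons, Hfg, IH; [reflexivity| |left; reflexivity].
  intros x Hx; apply Hfg; right; exact Hx.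
Qed.

Lemma sum_list_le (f g : A -> R) l :
  (forall x, In x l -> f x <= g x) -> sum_list f l <= sum_list g l.
Proof.
  induction l as [|a l IH]; intros Hfg; [unfold sum_list; simpl; lra|].
  rewrite !sum_list_cons. apply Rplus_le_compat.
  - apply Hfg; left; reflexivity.
  - apply IH; intros x Hx; apply Hfg; right; exact Hx.
Qed.

Lemma sum_list_plus (f g : A -> R) l :
  sum_list (fun x => f x + g x) l = sum_list f l + sum_list g l.
Proof. induction l as [|a l IH]; [unfold sum_list; simpl; lra|]. rewrite !sum_list_cons, IH; lra. Qed.

Lemma sum_list_scal c (f : A -> R) l : sum_list (fun x => c * f x) l = c * sum_list f l.
Proof. induction l as [|a l IH]; [unfold sum_list; simpl; lra|]. rewrite !sum_list_cons, IH; lra. Qed.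

End SumList.

Lemma sum_list_map {A B} (f : B -> R) (g : A -> B) l :
  sum_list f (map g l) = sum_list (fun x => f (g x)) l.
Proof. induction l as [|a l IH]; [reflexivity|]. simpl map. rewrite !sum_list_cons, IH; reflexivity. Qed.

Lemma sum_list_flat_map {A B} (f : B -> R) (g : A -> list B) l :
  sum_list f (flat_map g l) = sum_list (fun x => sum_list f (g x)) l.
Proof. induction l as [|a l IH]; [reflexivity|]. simpl flat_map. rewrite sum_list_app, sum_list_cons, IH; reflexivity. Qed.

(* Binomial coefficient extended by 0 for k > n, so that Pascal's rule
   holds without side conditions. *)
Definition binom (n k : nat) : R := if Nat.leb k n then C n k else 0.

Lemma binom_nonneg n k : 0 <= binom n k.
Proof.
  unfold binom, C, Rdiv. destruct (Nat.leb k n); [|lra].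
  apply Rmult_le_pos; [apply pos_INR|].
  left; apply Rinv_0_lt_compat, Rmult_lt_0_compat; apply lt_0_INR, Factorial.lt_O_fact.
Qed.

Lemma binom_n0 n : binom n 0 = 1.
Proof. unfold binom, C. simpl. rewrite Nat.sub_0_r. field. apply INR_fact_neq_0. Qed.

Lemma binom_over n k : (n < k)%nat -> binom n k = 0.
Proof. intros Hnk. unfold binom. replace (Nat.leb k n) with false; [reflexivity|]. symmetry; apply Nat.leb_gt; lia. Qed.

Lemma binom_pascal n j : binom (S n) (S j) = binom n j + binom n (S j).
Proof.
  destruct (Nat.lt_total j n) as [Hlt|[->|Hgt]].
  - unfold binom. rewrite !(proj2 (Nat.leb_le _ _)) by lia. symmetry; apply pascal; exact Hlt.
  - rewrite (binom_over n (S n)) by lia. unfold binom.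
    rewrite !Nat.leb_refl.
    assert (Hdiag : forall m, C m m = 1).
    { intros m. unfold C. rewrite Nat.sub_diag. simpl. field. apply INR_fact_neq_0. }
    rewrite !Hdiag. ring.
  - rewrite !binom_over by lia. lra.
Qed.

Definition binom_exp (p : R) (n : nat) (h : nat -> R) : R :=
  sum_list (fun k => binom n k * p ^ k * (1 - p) ^ (n - k) * h k) (seq 0 (S n)).

Lemma binom_exp_ext p n h g :
  (forall k, (k <= n)%nat -> h k = g k) -> binom_exp p n h = binom_exp p n g.
Proof. intros Hhg; unfold binom_exp; apply sum_list_ext; intros k Hk; apply in_seq in Hk. rewrite Hhg by lia; reflexivity. Qed.

Lemma binom_exp_plus p n h g :
  binom_exp p n (fun k => h k + g k) = binom_exp p n h + binom_exp p n g.
Proof. unfold binom_exp; rewrite <- sum_list_plus; apply sum_list_ext; intros; ring. Qed.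

Lemma binom_exp_scal p n c h : binom_exp p n (fun k => c * h k) = c * binom_exp p n h.
Proof. unfold binom_exp; rewrite <- sum_list_scal; apply sum_list_ext; intros; ring. Qed.

Lemma binom_exp_mono p n h g :
  0 <= p <= 1 -> (forall k, (k <= n)%nat -> h k <= g k) -> binom_exp p n h <= binom_exp p n g.
Proof.
  intros Hp Hhg; unfold binom_exp; apply sum_list_le; intros k Hk; apply in_seq in Hk.
  apply Rmult_le_compat_l; [|apply Hhg; lia].
  apply Rmult_le_pos; [apply Rmult_le_pos|]; [apply binom_nonneg|apply pow_le; lra|apply pow_le; lra].
Qed.

Lemma binom_exp_0 p h : binom_exp p 0 h = h 0%nat.
Proof. unfold binom_exp, sum_list. simpl. rewrite binom_n0. ring. Qed.

(* Conditioning on the first trial: Bin(n+1,p) = Ber(p) + Bin(n,p). *)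
Lemma binom_exp_S p n h :
  binom_exp p (S n) h = p * binom_exp p n (fun k => h (S k)) + (1 - p) * binom_exp p n h.
Proof.
  set (q := 1 - p).
  set (tail := fun j => binom n (S j) * p ^ (S j) * q ^ (n - j) * h (S j)).
  assert (Hsplit : binom_exp p (S n) h =
    q ^ (S n) * h 0%nat + p * binom_exp p n (fun k => h (S k)) + sum_list tail (seq 0 (S n))).
  { unfold binom_exp. change (seq 0 (S (S n))) with (0%nat :: seq 1 (S n)).
    rewrite <- seq_shift, sum_list_cons, sum_list_map, binom_n0, Rplus_assoc.
    rewrite <- sum_list_scal, <- sum_list_plus. simpl Nat.sub. fold q.
    f_equal; [ring|]. apply sum_list_ext; intros j _.
    unfold tail. rewrite binom_pascal. simpl pow. fold q. ring. }
  (* the last tail term vanishes since binom n (S n) = 0 *)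
  assert (Htail : sum_list tail (seq 0 (S n)) = sum_list tail (seq 0 n)).
  { rewrite seq_S, sum_list_app, sum_list_cons.
    unfold tail at 2. rewrite binom_over by lia. unfold sum_list at 2. simpl. ring. }
  assert (Hfail : q * binom_exp p n h = q ^ (S n) * h 0%nat + sum_list tail (seq 0 n)).
  { unfold binom_exp. change (seq 0 (S n)) with (0%nat :: seq 1 n).
    rewrite <- seq_shift, sum_list_cons, sum_list_map, binom_n0, Rmult_plus_distr_l, <- sum_list_scal.
    fold q. rewrite Nat.sub_0_r. f_equal; [simpl; ring|].
    apply sum_list_ext. intros j Hj. apply in_seq in Hj. unfold tail.
    replace (n - j)%nat with (S (n - S j)) by lia. simpl pow. ring. }
  rewrite Hsplit, Htail, Hfail. fold q. ring.
Qed.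

Lemma binom_exp_one p n : binom_exp p n (fun _ => 1) = 1.
Proof. induction n as [|n IH]; [apply binom_exp_0|]. rewrite binom_exp_S, IH. ring. Qed.

Lemma binom_mean p n : binom_exp p n INR = INR n * p.
Proof.
  induction n as [|n IH]; [rewrite binom_exp_0; simpl; ring|].
  rewrite binom_exp_S, IH, (binom_exp_ext _ _ (fun k => INR (S k)) (fun k => INR k + 1))
    by (intros; apply S_INR).
  rewrite binom_exp_plus, binom_exp_one, IH, S_INR. ring.
Qed.

Lemma binom_second_moment p n :
  binom_exp p n (fun k => INR k ^ 2) = INR n * p * (1 - p) + (INR n * p) ^ 2.
Proof.
  induction n as [|n IH]; [rewrite binom_exp_0; simpl; ring|].
  rewrite binom_exp_S, IH,
    (binom_exp_ext _ _ (fun k => INR (S k) ^ 2) (fun k => INR k ^ 2 + (2 * INR k + 1)))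
    by (intros; rewrite S_INR; ring).
  rewrite !binom_exp_plus, binom_exp_scal, binom_exp_one, binom_mean, IH, S_INR. ring.
Qed.

Lemma binom_exp_square p n a r :
  binom_exp p n (fun k => (a - r * INR k) ^ 2)
  = (a - r * (INR n * p)) ^ 2 + r ^ 2 * (INR n * p * (1 - p)).
Proof.
  rewrite (binom_exp_ext _ _ _ (fun k => a ^ 2 * 1 + ((-2 * a * r) * INR k + r ^ 2 * INR k ^ 2)))
    by (intros; ring).
  rewrite !binom_exp_plus, !binom_exp_scal, binom_exp_one, binom_mean, binom_second_moment. ring.
Qed.

Lemma trans_expectation mu lambda x (h : nat -> R) :
  (mu <= lambda)%nat ->
  sum_list (fun y => trans mu lambda x y * h y) (seq 0 (S mu)) =
  binom_exp (INR x / (eul * INR mu)) lambda (fun b => h (Nat.min mu b)).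
Proof.
  intros Hml. set (p := INR x / (eul * INR mu)).
  rewrite seq_S, sum_list_app, sum_list_cons. unfold binom_exp.
  replace (S lambda) with (mu + (S lambda - mu))%nat by lia.
  rewrite seq_app, sum_list_app. f_equal.
  -
    apply sum_list_ext. intros y Hy. apply in_seq in Hy.
    unfold trans, binom_pmf, binom. fold p.
    rewrite (proj2 (Nat.ltb_lt _ _)), (proj2 (Nat.leb_le _ _)), Nat.min_r by lia. ring.
  - (* the cap mu collects all outcomes B >= mu *)
    unfold trans. fold p. simpl (0 + mu)%nat.
    rewrite (proj2 (Nat.ltb_ge _ _)), Nat.eqb_refl by lia.
    change (fold_right Rplus 0 (map ?f ?l)) with (sum_list f l).
    unfold sum_list at 2. simpl fold_right. rewrite Rplus_0_r, Rmult_comm, <- sum_list_scal.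
    apply sum_list_ext. intros b Hb. apply in_seq in Hb.
    unfold binom_pmf, binom. rewrite (proj2 (Nat.leb_le _ _)), Nat.min_l by lia. ring.
Qed.

Definition total_mass mu lambda x n := sum_list (path_prob mu lambda x) (paths mu n).

Lemma paths_S m n : paths m (S n) = flat_map (fun y => map (cons y) (paths m n)) (seq 0 (S m)).
Proof. reflexivity. Qed.

Lemma total_mass_one mu lambda n x : (mu <= lambda)%nat -> total_mass mu lambda x n = 1.
Proof.
  intros Hml. revert x. induction n as [|n IH]; intros x.
  - unfold total_mass, sum_list. simpl. ring.
  - unfold total_mass. rewrite paths_S, sum_list_flat_map.
    rewrite (sum_list_ext _ (fun y => trans mu lambda x y * 1)).
    2:{ intros y _. rewrite sum_list_map. simpl path_prob. rewrite sum_list_scal.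
        fold (total_mass mu lambda y n). rewrite IH. reflexivity. }
    rewrite trans_expectation by exact Hml. apply binom_exp_one.
Qed.

(* First-step decomposition of the hitting probability: after moving to y,
   either y is already below c (and every continuation counts) or the
   remaining n steps must hit. *)
Lemma hit_below_step mu lambda x n c :
  hit_below_prob mu lambda x (S n) c =
  sum_list (fun y => trans mu lambda x y *
     (if Rlt_dec (INR y) c then total_mass mu lambda y n else hit_below_prob mu lambda y n c))
   (seq 0 (S mu)).
Proof.
  unfold hit_below_prob at 1. rewrite paths_S.
  change (fold_right Rplus 0 (map ?f ?l)) with (sum_list f l).
  rewrite sum_list_flat_map. apply sum_list_ext. intros y _. rewrite sum_list_map.
  simpl existsb. simpl path_prob. unfold total_mass, hit_below_prob.
  change (fold_right Rplus 0 (map ?f ?l)) with (sum_list f l).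
  destruct (Rlt_dec (INR y) c); simpl orb; rewrite <- sum_list_scal; [reflexivity|].
  apply sum_list_ext. intros q _. destruct (existsb _ q); ring.
Qed.

Lemma shortfall_sq_le_shrunk (a b r : R) :
  0 <= r <= 1 -> 0 <= b -> (Rmax 0 (a - b)) ^ 2 <= (a - r * b) ^ 2.
Proof.
  intros Hr Hb. unfold Rmax. destruct (Rle_dec 0 (a - b)).
  - apply pow_incr; nra.
  - rewrite pow_i by lia. apply pow2_ge_0.
Qed.

Lemma drift_bound (x0 x m p : R) :
  0 <= x0 -> 0 <= x <= m -> 0 <= p <= 1 ->
  exists r, 0 <= r <= 1 /\
    (x0 - r * m) ^ 2 + r ^ 2 * (m * (1 - p)) <= (Rmax 0 (x0 - x)) ^ 2 + x0.
Proof.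
  intros Hx0 Hx Hp.
  set (a := Rmin x x0).
  assert (Hshort : (x0 - a) ^ 2 = (Rmax 0 (x0 - x)) ^ 2).
  { unfold a, Rmin, Rmax. destruct (Rle_dec x x0), (Rle_dec 0 (x0 - x)); try lra; ring. }
  assert (Ha : 0 <= a <= x0 /\ a <= m) by (unfold a, Rmin; destruct (Rle_dec x x0); lra).
  destruct (Req_dec m 0) as [Hm0|Hm0].
  - exists 0. split; [lra|]. assert (a = 0) by lra. rewrite <- Hshort. nra.
  - set (r := a / m).
    assert (Har : a = r * m) by (unfold r; field; exact Hm0).
    assert (Hr : 0 <= r <= 1).
    { split; apply (Rmult_le_reg_r m); lra. }
    exists r. split; [exact Hr|]. rewrite <- Har, Hshort.
    (* the variance term r^2 m (1-p) = a r (1-p) is at most a <= x0 *)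
    assert (r ^ 2 * (m * (1 - p)) = a * r * (1 - p)) as -> by (rewrite Har; ring).
    assert (0 <= a * r) by (apply Rmult_le_pos; lra).
    assert (a * r <= a) by nra.
    nra.
Qed.

(* e >= 1, so lambda >= e mu forces lambda >= mu and p = x/(e mu) <= 1. *)
Lemma eul_ge_1 : 1 <= eul.
Proof. unfold eul. pose proof (exp_ineq1 1). lra. Qed.

Section HittingBound.

Variables (mu lambda x0 : nat) (Delta : R).
Hypothesis Hmu : (1 <= mu)%nat.
Hypothesis Hlam : eul * INR mu <= INR lambda.
Hypothesis Hx0 : (x0 <= mu)%nat.
Hypothesis HDelta : 0 < Delta.

Let c := INR x0 - Delta.

Definition shortfall (x : nat) : R := Rmax 0 (INR x0 - INR x).

Definition potential (n x : nat) : R := (shortfall x ^ 2 + INR n * INR x0) / Delta ^ 2.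

(* Needed so that the cap mu is within the binomial's range {0..lambda}. *)
Lemma mu_le_lambda : (mu <= lambda)%nat.
Proof.
  pose proof eul_ge_1. assert (1 <= INR mu) by (apply (le_INR 1); exact Hmu).
  apply INR_le. nra.
Qed.

Lemma success_prob_facts x :
  (x <= mu)%nat ->
  0 <= INR x / (eul * INR mu) <= 1 /\ INR x <= INR lambda * (INR x / (eul * INR mu)).
Proof.
  intros Hx. pose proof eul_ge_1.
  assert (1 <= INR mu) by (apply (le_INR 1); exact Hmu).
  assert (INR x <= INR mu) by (apply le_INR; exact Hx).
  pose proof (pos_INR x).
  assert (Hem : 0 < eul * INR mu) by nra.
  split; [split|].
  - apply Rmult_le_pos; [lra|]. left; apply Rinv_0_lt_compat, Hem.
  - apply (Rmult_le_reg_r (eul * INR mu)); [exact Hem|]. field_simplify; nra.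
  - apply (Rmult_le_reg_r (eul * INR mu)); [exact Hem|]. field_simplify; nra.
Qed.

(* Capping at mu >= x0 never increases the shortfall beyond that of r * b. *)
Lemma shortfall_capped_le r b :
  0 <= r <= 1 -> shortfall (Nat.min mu b) ^ 2 <= (INR x0 - r * INR b) ^ 2.
Proof.
  intros Hr. unfold shortfall. destruct (Nat.le_gt_cases b mu).
  - rewrite Nat.min_r by lia. apply shortfall_sq_le_shrunk; [exact Hr|apply pos_INR].
  - rewrite Nat.min_l by lia.
    assert (INR x0 <= INR mu) by (apply le_INR; exact Hx0).
    rewrite Rmax_left by lra. rewrite pow_i by lia. apply pow2_ge_0.
Qed.

Lemma continuation_le n r b :
  (forall y, (y <= mu)%nat -> hit_below_prob mu lambda y n c <= potential n y) ->
  0 <= r <= 1 ->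
  (if Rlt_dec (INR (Nat.min mu b)) c
   then total_mass mu lambda (Nat.min mu b) n
   else hit_below_prob mu lambda (Nat.min mu b) n c)
  <= ((INR x0 - r * INR b) ^ 2 + INR n * INR x0) / Delta ^ 2.
Proof.
  intros IH Hr.
  assert (HD2 : 0 < Delta ^ 2) by (apply pow_lt; exact HDelta).
  assert (Hcap := shortfall_capped_le r b Hr).
  assert (0 <= INR n * INR x0) by (apply Rmult_le_pos; apply pos_INR).
  apply (Rmult_le_reg_r (Delta ^ 2)); [exact HD2|].
  unfold Rdiv. rewrite Rmult_assoc, Rinv_l, Rmult_1_r by lra.
  destruct (Rlt_dec (INR (Nat.min mu b)) c) as [Hbelow|Habove].
  - (* below c the shortfall exceeds Delta *)
    rewrite total_mass_one by exact mu_le_lambda.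
    assert (Delta ^ 2 <= shortfall (Nat.min mu b) ^ 2).
    { unfold shortfall, c in *. rewrite Rmax_right by lra. apply pow_incr; lra. }
    lra.
  - assert (Hrec := IH (Nat.min mu b) ltac:(lia)). unfold potential in Hrec.
    apply (Rmult_le_compat_r (Delta ^ 2)) in Hrec; [|lra].
    unfold Rdiv in Hrec. rewrite Rmult_assoc, Rinv_l, Rmult_1_r in Hrec by lra.
    lra.
Qed.

Lemma hit_below_potential n x :
  (x <= mu)%nat -> hit_below_prob mu lambda x n c <= potential n x.
Proof.
  revert x. induction n as [|n IH]; intros x Hx.
  - assert (hit_below_prob mu lambda x 0 c = 0) as -> by (unfold hit_below_prob; simpl; ring).
    unfold potential. change (INR 0) with 0. rewrite Rmult_0_l, Rplus_0_r.
    apply Rle_mult_inv_pos; [apply pow2_ge_0|apply pow_lt, HDelta].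
  - rewrite hit_below_step, trans_expectation by exact mu_le_lambda.
    set (p := INR x / (eul * INR mu)).
    destruct (success_prob_facts x Hx) as [Hp Hmean]. fold p in Hp, Hmean.
    destruct (drift_bound (INR x0) (INR x) (INR lambda * p) p) as [r [Hr Hdrift]];
      [apply pos_INR|split; [apply pos_INR|exact Hmean]|exact Hp|].
    eapply Rle_trans.
    { apply binom_exp_mono; [exact Hp|]. intros b _. apply continuation_le; [exact IH|exact Hr]. }
    rewrite (binom_exp_ext _ _ _ (fun b => / Delta ^ 2 * (INR x0 - r * INR b) ^ 2
                                          + (INR n * INR x0 / Delta ^ 2) * 1))
      by (intros; unfold Rdiv; ring).
    rewrite binom_exp_plus, !binom_exp_scal, binom_exp_one, binom_exp_square.
    unfold potential, shortfall. rewrite S_INR.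
    assert (0 < / Delta ^ 2) by (apply Rinv_0_lt_compat, pow_lt, HDelta).
    unfold Rdiv. nra.
Qed.

End HittingBound.

Theorem lemma6 (mu lambda x0 t : nat) (Delta : R)
  (Hmu : (1 <= mu)%nat) (Hlam : (1 <= lambda)%nat)
  (Hle : eul * INR mu <= INR lambda)
  (Hx0 : (1 <= x0 <= mu)%nat) (HD : 0 < Delta) :
  hit_below_prob mu lambda x0 t (INR x0 - Delta) <= INR t * INR x0 / Delta ^ 2.
Proof.
  (* start the potential bound at x = x0, where the shortfall is 0 *)
  eapply Rle_trans.
  - apply (hit_below_potential mu lambda x0 Delta); auto; lia.
  - unfold potential, shortfall. rewrite Rminus_diag, Rmax_left by lra.
    right. field. lra.
Qed.
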